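(* Let $W\subseteq K_n$ be a $k$-wheel with vertex set $V$ and center $v_0$. (i) If $v_0=\min V$, label the spokes so that $W=W(v_0;v_1,\dots,v_k)$ with $v_1=\max\{v_1,\dots,v_k\}$ and $v_2>v_k$. Then $LT(W)=(\mathrm{Rd}(W)\setminus\{v_0v_1\})\cup\{v_kv_1\}$. (ii) If $v_0=\max V$, label the spokes so that $W=W(v_0;v_1,\dots,v_k)$ with $v_1v_2$ the $\succ$-smallest chord of $W$ and $v_1>v_2$. Then $LT(W)=(\mathrm{Ch}(W)\setminus\{v_1v_2\})\cup\{v_0v_2\}$.
   Context: For $k\ge 3$ and distinct vertices $v_0,\dots,v_k\in[1,n]$, the $k$-wheel $W(v_0;v_1,\dots,v_k)$ has center $v_0$, radii $\mathrm{Rd}(W)=\{v_0v_i:1\le i\le k\}$ and chords $\mathrm{Ch}(W)=\{v_iv_{i+1}:1\le i\le k\}$ with $v_{k+1}=v_1$. A coupled tree of $W$ is a spanning tree $T\subseteq E(W)$ of $V(W)$ whose complement $E(W)\setminus T$ is also a spanning tree. Order the edges of $K_n$ totally by $12\succ13\succ\dots\succ1n\succ23\succ\dots\succ n{-}1\,n$ (for $a<b$, $c<d$: $ab\succ cd$ iff $a<c$, or $a=c$ and $b<d$). Extend to edge sets: $E\succ F$ iff $|E|>|F|$, or $|E|=|F|$ and the $\succ$-largest element of $E\triangle F$ lies in $E$. The leading tree $LT(W)$ is the $\succ$-largest coupled tree of $W$. *)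

From mathcomp Require Import all_boot finmap.
Set Implicit Arguments. Unset Strict Implicit. Unset Printing Implicit Defensive.
Local Open Scope fset_scope.

(* An edge ab of K_n is stored normalised as the pair (min a b, max a b). *)
Definition edge := (nat * nat)%type.
Definition mkedge (a b : nat) : edge := (minn a b, maxn a b).

Definition edge_succ (e f : edge) : bool :=
  (e.1 < f.1) || ((e.1 == f.1) && (e.2 < f.2)).

Definition symdiff (E F : {fset edge}) : {fset edge} := (E `\` F) `|` (F `\` E).
Definition set_succ (E F : {fset edge}) : Prop :=
  (#|` F| < #|` E|)%N \/
  (#|` E| = #|` F| /\
   exists e, [/\ e \in symdiff E F, e \in E &
               forall f, f \in symdiff E F -> f != e -> edge_succ e f]).

(* The k-wheel W(v0; v1,...,vk), with vs = [:: v1; ...; vk]. *)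
Definition wheel_vertices (v0 : nat) (vs : seq nat) : seq nat := v0 :: vs.
Definition radii (v0 : nat) (vs : seq nat) : {fset edge} :=
  [fset mkedge v0 v | v in vs].
Definition chords (vs : seq nat) : {fset edge} :=
  [fset mkedge (nth 0 vs i) (nth 0 vs (i.+1 %% size vs)) | i in iota 0 (size vs)].
Definition wheel_edges (v0 : nat) (vs : seq nat) : {fset edge} :=
  radii v0 vs `|` chords vs.

Definition adj (T : {fset edge}) : rel nat := fun u v => mkedge u v \in T.
Definition connected_on (V : seq nat) (T : {fset edge}) : Prop :=
  forall u v, u \in V -> v \in V ->
    exists p : seq nat, path (adj T) u p /\ last u p = v.
Definition has_cycle (T : {fset edge}) : Prop :=
  exists c : seq nat, [/\ (3 <= size c)%N, uniq c & cycle (adj T) c].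
Definition spanning_tree (V : seq nat) (T : {fset edge}) : Prop :=
  [/\ forall e, e \in T -> e.1 \in V /\ e.2 \in V,
      connected_on V T & ~ has_cycle T].

Definition coupled_tree (v0 : nat) (vs : seq nat) (T : {fset edge}) : Prop :=
  [/\ T `<=` wheel_edges v0 vs,
      spanning_tree (wheel_vertices v0 vs) T &
      spanning_tree (wheel_vertices v0 vs) (wheel_edges v0 vs `\` T)].

Definition leading_tree (v0 : nat) (vs : seq nat) (T : {fset edge}) : Prop :=
  coupled_tree v0 vs T /\
  forall T', coupled_tree v0 vs T' -> T' != T -> set_succ T T'.

Definition is_wheel (n : nat) (v0 : nat) (vs : seq nat) : Prop :=
  [/\ (3 <= size vs)%N, uniq (v0 :: vs) & all (fun v => (1 <= v <= n)%N) (v0 :: vs)].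

From mathcomp Require Import all_boot finmap zify.
Set Implicit Arguments. Unset Strict Implicit. Unset Printing Implicit Defensive.
Local Open Scope fset_scope.

(* Every coupled tree of the k-wheel W is a forest on k + 1 vertices, hence has at most k
   edges, and the proposed tree T has exactly k; so T ≻ T' amounts to the ≻-largest edge m
   of T ∆ T' lying in T.  Suppose instead that m ∈ T' \ T, so that T and T' agree on all
   edges ≻ m.
   In case (i) T is the star at v0 over v2, ..., vk plus the edge vkv1, and its complement
   is the path v0 v1 ... vk.  As v0 is the smallest vertex, every radius precedes every
   chord.  If m = v0v1 then every radius lies in T', isolating v0 in the complement of T';
   if m = v1v2 then T' contains the 4-cycle v0 v2 v1 vk; any other chord closes a triangle
   with two radii of T.
   In case (ii) T is the path v0 v2 ... vk v1, and its complement is the star at v0 over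
   v1, v3, ..., vk plus the edge v1v2.  Now chords precede radii.  If m = v0v1 then T' contains
   T + v0v1, a cycle; if m = v0y with y ≠ v1, v2, then a neighbour of y in the complement of
   T' yields a chord ≻ m outside T, which can only be v1v2; and if m = v1v2 then T' contains
   the whole rim. *)

(** * Edges and the edge order *)

Lemma mkedgeC a b : mkedge a b = mkedge b a.
Proof. by rewrite /mkedge minnC maxnC. Qed.

Lemma mkedge_eq a b c d : mkedge a b = mkedge c d -> (a = c /\ b = d) \/ (a = d /\ b = c).
Proof. by rewrite /mkedge => -[]; lia. Qed.

Lemma mkedge_inj a b c : mkedge a b = mkedge a c -> b = c.
Proof. by rewrite /mkedge => -[]; lia. Qed.

Lemma mkedge_ends a b : a = (mkedge a b).1 \/ a = (mkedge a b).2.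
Proof. by rewrite /mkedge /=; lia. Qed.

Lemma mem_mkedge (V : seq nat) a b : a \in V -> b \in V ->
  (mkedge a b).1 \in V /\ (mkedge a b).2 \in V.
Proof. by rewrite /mkedge /= => aV bV; split; [case: leqP|case: leqP]. Qed.

Lemma mkedge_pair e : e.1 < e.2 -> mkedge e.1 e.2 = e.
Proof. by case: e => a b /= ab; rewrite /mkedge (minn_idPl (ltnW ab)) (maxn_idPr (ltnW ab)). Qed.

Lemma adjC S x y : adj S x y = adj S y x.
Proof. by rewrite /adj mkedgeC. Qed.

Lemma edge_succ_trans e f g : edge_succ e f -> edge_succ f g -> edge_succ e g.
Proof. by case: e f g => [a b] [c d] [x y]; rewrite /edge_succ /=; lia. Qed.

Lemma edge_succ_irr e : ~~ edge_succ e e.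
Proof. by rewrite /edge_succ; lia. Qed.

Lemma edge_succ_total e f : e != f -> edge_succ e f || edge_succ f e.
Proof. by case: e f => [a b] [c d]; rewrite /edge_succ /= xpair_eqE; lia. Qed.

Lemma edge_succ_asym e f : edge_succ e f -> edge_succ f e -> False.
Proof. by case: e f => [a b] [c d]; rewrite /edge_succ /=; lia. Qed.

Lemma edge_succ_fst e f : edge_succ e f -> e.1 <= f.1.
Proof. by rewrite /edge_succ; lia. Qed.

Lemma edge_succ_mkedge_below a b c d : a < c -> a < d -> edge_succ (mkedge a b) (mkedge c d).
Proof. by rewrite /edge_succ /mkedge /=; lia. Qed.

Lemma edge_succ_mkedge_shared a b c : b < c -> a != b -> a != c ->
  edge_succ (mkedge a b) (mkedge a c).
Proof. by rewrite /edge_succ /mkedge /=; lia. Qed.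

(** * Forests and spanning trees *)

Definition simple_on (V : seq nat) (S : {fset edge}) :=
  forall e, e \in S -> [/\ e.1 < e.2, e.1 \in V & e.2 \in V].

Lemma simple_on_sub V V' S : {subset V <= V'} -> simple_on V S -> simple_on V' S.
Proof. by move=> sVV' HS e /HS [? /sVV' ? /sVV' ?]. Qed.

Lemma simple_on_fsub V S S' : S' `<=` S -> simple_on V S -> simple_on V S'.
Proof. by move=> /fsubsetP sS'S HS e /sS'S /HS. Qed.

Lemma simple_onU V A B : simple_on V A -> simple_on V B -> simple_on V (A `|` B).
Proof. by move=> HA HB e; rewrite in_fsetU => /orP [/HA|/HB]. Qed.

Lemma simple_onU1 V S a b : a != b -> a \in V -> b \in V ->
  simple_on V S -> simple_on V (mkedge a b |` S).
Proof.
move=> ab aV bV HS e; rewrite in_fset1U => /orP [/eqP ->|/HS //].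
have [] := mem_mkedge aV bV; split=> //; rewrite /mkedge /=; lia.
Qed.

Lemma simple_on_ends V S : simple_on V S -> forall e, e \in S -> e.1 \in V /\ e.2 \in V.
Proof. by move=> HS e /HS []. Qed.

Lemma mkedge_notin (V : seq nat) (S : {fset edge}) a b :
  (forall e, e \in S -> e.1 \in V /\ e.2 \in V) -> a \notin V -> mkedge a b \notin S.
Proof.
by move=> HS aV; apply/negP => /HS []; case: (mkedge_ends a b) => <-; rewrite (negbTE aV).
Qed.

Lemma simple_on_adj_irr V S x : simple_on V S -> ~~ adj S x x.
Proof. by move=> HS; apply/negP => /HS [] /=; rewrite /mkedge /=; lia. Qed.

Lemma adj_mem V S x y : simple_on V S -> adj S x y -> x \in V /\ y \in V.
Proof.
move=> HS /HS [_ H1 H2]; split; [case: (mkedge_ends x y) H1 H2 => <- //|].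
by rewrite mkedgeC in H1 H2; case: (mkedge_ends y x) H1 H2 => <-.
Qed.

Lemma has_cycle_fsub S S' : S' `<=` S -> has_cycle S' -> has_cycle S.
Proof.
move=> /fsubsetP sS'S [c [c3 cu cc]]; exists c; split=> //.
by apply: sub_cycle cc => x y /sS'S.
Qed.

Lemma split_distinct (s : seq nat) y1 y2 : y1 \in s -> y2 \in s -> y1 != y2 ->
  exists a y t y', [/\ s = a ++ y :: t, y' \in t & [:: y; y'] =i [:: y1; y2]].
Proof.
move=> /splitPr [a t]; rewrite mem_cat inE => + y12; rewrite eq_sym (negbTE y12) /=.
case/orP => [/splitPr [a1 a2]|y2t].
  exists a1, y2, (a2 ++ y1 :: t), y1; rewrite -catA mem_cat inE eqxx orbT.
  by split=> // z; rewrite !inE orbC.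
by exists a, y1, t, y2.
Qed.

Lemma path_end_cycle V S x p y1 y2 : simple_on V S ->
  path (adj S) x p -> uniq (x :: p) -> y1 \in x :: p -> y2 \in x :: p -> y1 != y2 ->
  adj S (last x p) y1 -> adj S (last x p) y2 -> has_cycle S.
Proof.
move=> HS Hp Hu y1p y2p y12 A1 A2.
have [a [y [t [y' [Ept y't Eyy']]]]] := split_distinct y1p y2p y12.
have Ay : forall z, z \in [:: y; y'] -> adj S (last x p) z.
  by move=> z; rewrite Eyy' !inE => /orP [/eqP ->|/eqP ->].
have {A1 A2} [A A'] : adj S (last y t) y /\ adj S (last y t) y'.
  have -> : last y t = last x p by rewrite -[last x p]/(last 0 (x :: p)) Ept last_cat.
  by rewrite !Ay ?inE ?eqxx ?orbT.
have Hpt : path (adj S) y t.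
  by move: Hp; rewrite -[path _ x p]/(sorted _ (x :: p)) Ept => /cat_sorted2 [].
exists (y :: t); split.
- have lastt : last y t \in t.
    have := mem_last y t; rewrite inE => /orP [/eqP E|//].
    by move: A; rewrite E (negbTE (simple_on_adj_irr _ HS)).
  have y'last : y' != last y t.
    by apply/eqP=> E; move: A'; rewrite E (negbTE (simple_on_adj_irr _ HS)).
  case: t y't lastt y'last {Ept A A' Hpt} => [|z [|w t]] //.
  by rewrite !inE => /eqP -> /eqP ->; rewrite eqxx.
- by move: Hu; rewrite Ept cat_uniq => /and3P [].
- by rewrite /= rcons_path Hpt A.
Qed.

Lemma acyclic_leaf_of_path V S x p : simple_on V S -> ~ has_cycle S ->
  path (adj S) x p -> uniq (x :: p) -> all (mem V) (x :: p) -> p != [::] ->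
  exists l w, adj S l w /\ forall y, adj S l y -> y = w.
Proof.
move=> HS acyc; have [n] := ubnP (size V - size p); elim: n p => // n IH p Hn Hp Hu HV p0.
have [/hasP [y yV /andP [Ay ynp]]|closed] :=
  boolP (has (fun y => adj S (last x p) y && (y \notin x :: p)) V).
  have : size (y :: x :: p) <= size V.
    apply: uniq_leq_size; first by rewrite cons_uniq ynp Hu.
    by move=> z; rewrite inE => /orP [/eqP ->|/(allP HV)].
  move=> Hsize; apply: (IH (rcons p y)).
  - by rewrite size_rcons; move: Hsize Hn => /=; lia.
  - by rewrite rcons_path Hp Ay.
  - by rewrite -rcons_cons rcons_uniq ynp Hu.
  - by rewrite -rcons_cons all_rcons HV andbT.
  - by case: (p).
case/lastP: p Hp Hu closed p0 {HV Hn} => [|p l] Hp Hu closed p0 //.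
move: Hp; rewrite rcons_path => /andP [Hp Al].
exists l, (last x p); split; first by rewrite adjC.
move=> y Ay; apply/eqP; apply: contraT => yl; case: acyc.
apply: (path_end_cycle (y1 := y) (y2 := last x p) HS _ Hu); rewrite ?last_rcons ?rcons_path ?Hp //.
- move/hasPn: closed => /(_ y); rewrite last_rcons Ay /= negbK; apply.
  by case: (adj_mem HS Ay).
- by rewrite -rcons_cons mem_rcons inE mem_last orbT.
- by rewrite adjC.
Qed.

Lemma acyclic_card V S : uniq V -> simple_on V S -> ~ has_cycle S -> #|` S| <= (size V).-1.
Proof.
move: {2}#|` S| (erefl #|` S|) => N; elim: N S V => [|N IH] S V NS HV HS acyc; first by rewrite NS.
have [e eS] : exists e, e \in S by apply/fset0Pn; rewrite -cardfs_gt0 NS.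
have [e12 e1V e2V] := HS e eS.
have [l [w [Alw leaf]]] : exists l w, adj S l w /\ forall y, adj S l y -> y = w.
  apply: (acyclic_leaf_of_path (x := e.1) (p := [:: e.2]) HS) => //=.
  - by rewrite andbT /adj mkedge_pair.
  - by rewrite inE andbT; apply/eqP => E; move: e12; rewrite E ltnn.
  - by rewrite e1V e2V.
have [lV wV] := adj_mem HS Alw.
have lw : l != w by apply: contraTneq Alw => ->; exact: simple_on_adj_irr HS.
set e0 := mkedge l w; have e0S : e0 \in S := Alw.
have HS' : simple_on (rem l V) (S `\ e0).
  move=> f; rewrite in_fsetD1 => /andP [fe0 fS]; have [f12 f1V f2V] := HS f fS.
  rewrite !(mem_rem_uniq l HV) !inE f1V f2V !andbT; split=> //.
  - apply: contraNneq fe0 => f1l; have Af : adj S l f.2 by rewrite /adj -f1l mkedge_pair.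
    by rewrite /e0 -(leaf _ Af) -f1l mkedge_pair.
  - apply: contraNneq fe0 => f2l; have Af : adj S l f.1 by rewrite /adj -f2l mkedgeC mkedge_pair.
    by rewrite /e0 -(leaf _ Af) -f2l mkedgeC mkedge_pair.
have acyc' : ~ has_cycle (S `\ e0) by move/(has_cycle_fsub (fsubD1set S e0)).
have w_rem : w \in rem l V by rewrite (mem_rem_uniq l HV) inE eq_sym lw.
have := IH _ _ _ (rem_uniq l HV) HS' acyc'; rewrite size_rem //.
have := cardfsD1 e0 S; rewrite e0S NS add1n => -[<-] /(_ erefl).
have : 0 < size (rem l V) by case: (rem l V) w_rem.
by rewrite size_rem //; lia.
Qed.

Lemma spanning_tree_eq_mem V V' S : V =i V' -> spanning_tree V S -> spanning_tree V' S.
Proof.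
move=> VV' [ends conn acyc]; split=> // [e /ends|u v]; rewrite -!VV' //; exact: conn.
Qed.

Lemma spanning_tree1 x : spanning_tree [:: x] fset0.
Proof.
split=> [e|u v|[[|a [|b c]] [//= _ /andP [] //]]]; rewrite ?inE //.
by move=> /eqP -> /eqP ->; exists [::].
Qed.

Lemma cycle_neighbours (e : rel nat) c x : uniq c -> 3 <= size c -> cycle e c -> x \in c ->
  exists y z, [/\ y != z, e x y & e z x].
Proof.
move=> cu c3 cc /rot_to [i p Ec].
move: cu c3 cc; rewrite -(rot_uniq i) -(size_rot i) -(rot_cycle i) Ec.
case: p {Ec} => [|y q] //; case/lastP: q => [|q z] //= /and3P [_ yqz _] _ /andP [Axy].
rewrite rcons_path last_rcons => /andP [_ Azx]; exists y, z; split=> //.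
by apply: contraNneq yqz => ->; rewrite mem_rcons inE eqxx.
Qed.

Lemma spanning_tree_pendant V S a b : spanning_tree V S -> a \notin V -> b \in V ->
  spanning_tree (a :: V) (mkedge a b |` S).
Proof.
case=> ends conn acyc aV bV; set S' := mkedge a b |` S.
have AS' x y : adj S x y -> adj S' x y by rewrite /adj in_fset1U orbC => ->.
have Aab : adj S' a b by rewrite /adj in_fset1U eqxx.
have conn' u v : u \in V -> v \in V -> exists p, path (adj S') u p /\ last u p = v.
  by move=> uV vV; have [p [Hp <-]] := conn u v uV vV; exists p; split=> //; exact: (sub_path AS').
have adj_a y : adj S' a y -> y = b.
  rewrite /adj in_fset1U (negbTE (mkedge_notin _ ends aV)) orbF => /eqP; exact: mkedge_inj.
split.
- move=> e; rewrite in_fset1U => /orP [/eqP ->|/ends [e1 e2]]; last by rewrite !inE e1 e2 !orbT.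
  by apply: mem_mkedge; rewrite inE ?eqxx ?bV ?orbT.
- move=> u v; rewrite !inE => /orP [/eqP ->|uV] /orP [/eqP ->|vV].
  + by exists [::].
  + by have [p [Hp <-]] := conn' b v bV vV; exists (b :: p); rewrite /= Aab Hp.
  + have [p [Hp Hl]] := conn' u b uV bV; exists (rcons p a).
    by rewrite rcons_path last_rcons Hp Hl adjC Aab.
  + exact: conn'.
- move=> [c [c3 cu cc]]; have [ac|ac] := boolP (a \in c).
    have [y [z [yz Ay Az]]] := cycle_neighbours cu c3 cc ac.
    by rewrite adjC in Az; move: yz; rewrite (adj_a _ Ay) (adj_a _ Az) eqxx.
  apply: acyc; exists c; split=> //; apply: (sub_in_cycle (P := predC1 a)) cc; last first.
    by apply/allP => x xc /=; apply: contraNneq ac => <-.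
  move=> x y; rewrite !inE => xa ya; rewrite /adj in_fset1U => /orP [/eqP E|//].
  by case: (mkedge_ends a b); rewrite -E /mkedge /=; lia.
Qed.

Lemma connected_on_neighbour V S x z : connected_on V S -> x \in V -> z \in V -> x != z ->
  exists y, adj S x y.
Proof.
move=> conn xV zV; have [[|y p] []] := conn x z xV zV; first by move=> _ /= ->; rewrite eqxx.
by move=> /= /andP [Axy _] _ _; exists y.
Qed.

(** * Comparing edge sets *)

Lemma exists_edge_succ_max (s : seq edge) : s != [::] ->
  exists2 m, m \in s & forall f, f \in s -> f != m -> edge_succ m f.
Proof.
elim: s => [//|a s IH] _; have [->|/IH [b bs bmax]] := eqVneq s [::].
  by exists a => [|f]; rewrite ?inE // => ->.
have [->|ab] := eqVneq a b.
  by exists b => [|f]; rewrite ?inE ?bs ?orbT // => /orP [/eqP ->|/bmax]; rewrite ?eqxx.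
case/orP: (edge_succ_total ab) => [Hab|Hba].
  exists a => [|f]; rewrite ?inE ?eqxx // => /orP [/eqP ->|fs]; first by rewrite eqxx.
  by have [->|fb] := eqVneq f b; last by move=> _; apply: edge_succ_trans Hab (bmax f fs fb).
by exists b => [|f]; rewrite ?inE ?bs ?orbT // => /orP [/eqP -> //|/bmax].
Qed.

Definition agree_above (T T' : {fset edge}) (m : edge) :=
  forall h, edge_succ h m -> (h \in T) = (h \in T').

(* The hypothesis excludes that the ≻-largest edge of T ∆ T' lies in T'. *)
Lemma set_succ_of_no_leading_edge (T T' : {fset edge}) : #|` T'| <= #|` T| -> T' != T ->
  (forall m, m \in T' -> m \notin T -> ~ agree_above T T' m) -> set_succ T T'.
Proof.
move=> card_le T'T noedge; have [lt|ge] := ltnP #|` T'| #|` T|; [by left|right].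
split; first by apply/eqP; rewrite eqn_leq card_le ge.
have [x xD] : exists x, x \in symdiff T T'.
  apply/fset0Pn; apply: contraNneq T'T => D0; apply/eqP/fsetP => x.
  have := in_fset0 x; rewrite -D0 /symdiff in_fsetU !in_fsetD.
  by case: (x \in T) (x \in T') => [] [].
have : (symdiff T T' : seq edge) != [::].
  by have : x \in (symdiff T T' : seq edge) := xD; case: (symdiff T T' : seq edge).
move=> /exists_edge_succ_max [m mD mmax].
exists m; split=> //; move: (mD); rewrite /symdiff in_fsetU !in_fsetD.
have [//|mT] := boolP (m \in T); rewrite andbF /= => mT'; case: (noedge m mT' mT) => h hm.
have hD : h \in symdiff T T' -> False.
  move=> hD; have hm' : h != m by apply: contraTneq hm => ->; exact: edge_succ_irr.
  exact: edge_succ_asym hm (mmax h hD hm').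
apply/eqP; apply: contraT => hTT'; case: hD; rewrite /symdiff in_fsetU !in_fsetD.
by case: (h \in T) (h \in T') hTT' => [] [].
Qed.

(** * Wheels *)

Fixpoint path_edges (x : nat) (p : seq nat) : {fset edge} :=
  if p is y :: p' then mkedge x y |` path_edges y p' else fset0.

Lemma path_edges_rcons x p y : path_edges x (rcons p y) = mkedge (last x p) y |` path_edges x p.
Proof.
elim: p x => [|z p IH] x //=.
by rewrite IH; apply/fsetP => e; rewrite !in_fset1U orbCA.
Qed.

Lemma path_edgesE x p :
  path_edges x p = [fset mkedge (nth 0 (x :: p) i) (nth 0 (x :: p) i.+1) | i in iota 0 (size p)].
Proof.
elim: p x => [|y p IH] x /=; first by apply/fsetP => e; rewrite inE; apply/esym/imfsetP => -[].
rewrite IH; apply/fsetP => e; rewrite in_fset1U; apply/orP/imfsetP.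
- case=> [/eqP ->|/imfsetP [i]]; first by exists 0.
  by rewrite (mem_iota _ _ i) => ip ->; exists i.+1; rewrite // !inE mem_iota; lia.
- case=> -[_ ->|i]; first by left.
  rewrite !inE mem_iota => ip ->; right; apply/imfsetP.
  by exists i; rewrite // (mem_iota _ _ i); lia.
Qed.

Lemma chords_cons x s : chords (x :: s) = path_edges x (rcons s x).
Proof.
rewrite path_edgesE size_rcons /chords -rcons_cons; apply: eq_in_imfset => i iin.
have : i \in iota 0 (size (x :: s)) := iin; rewrite mem_iota => /andP [_ ilt].
rewrite !nth_rcons ilt; case: (ltngtP i.+1 (size (x :: s))) => [lt|gt|<-].
- by rewrite modn_small.
- by move: gt; rewrite ltnS leqNgt ilt.
- by rewrite modnn.
Qed.

Lemma path_edges_path x p : path (adj (path_edges x p)) x p.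
Proof.
elim: p x => [//|y p IH] x /=; rewrite /adj in_fset1U eqxx /=.
by apply: sub_path (IH y) => u v; rewrite /adj in_fset1U orbC => ->.
Qed.

Lemma chords_cycle vs : cycle (adj (chords vs)) vs.
Proof. by case: vs => [//|x s]; rewrite chords_cons /= path_edges_path. Qed.

Lemma simple_on_path_edges x p : uniq (x :: p) -> simple_on (x :: p) (path_edges x p).
Proof.
elim: p x => [|y p IH] x /=; first by move=> _ e; rewrite inE.
rewrite inE negb_or => /andP [/andP [xy xp] yu].
apply: simple_onU1; rewrite ?inE ?eqxx ?orbT //.
by apply: simple_on_sub (IH y yu) => z zyp; rewrite inE zyp orbT.
Qed.

Lemma mem_path_edges_start x y z p : uniq [:: x, y & p] ->
  mkedge x z \in path_edges x (y :: p) -> z = y.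
Proof.
move=> /= /andP [xyp yu]; rewrite in_fset1U => /orP [/eqP /mkedge_inj //|].
by rewrite (negbTE (mkedge_notin _ (simple_on_ends (simple_on_path_edges yu)) xyp)).
Qed.

Lemma card_path_edges x p : uniq (x :: p) -> #|` path_edges x p| = size p.
Proof.
elim: p x => [|y p IH] x; first by move=> _; apply/eqP.
rewrite cons_uniq => /andP [xyp yu] /=; rewrite cardfsU1 IH //.
by rewrite (mkedge_notin _ (simple_on_ends (simple_on_path_edges yu)) xyp).
Qed.

Lemma spanning_tree_path_edges x p : uniq (x :: p) -> spanning_tree (x :: p) (path_edges x p).
Proof.
elim: p x => [|y p IH] x /=; first by move=> _; exact: spanning_tree1.
move=> /andP [xyp yu]; apply: spanning_tree_pendant => //; first exact: IH.
by rewrite inE eqxx.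
Qed.

Lemma radii_nil c : radii c [::] = fset0.
Proof. by apply/fsetP => e; rewrite inE; apply/imfsetP => -[]. Qed.

Lemma radii_cons c v s : radii c (v :: s) = mkedge c v |` radii c s.
Proof.
apply/fsetP => e; rewrite in_fset1U; apply/imfsetP/orP => [[z]|[/eqP ->|/imfsetP [z zs ->]]].
- by rewrite inE => /orP [/eqP -> ->|zs ->]; [left|right; apply/imfsetP; exists z].
- by exists v; rewrite ?inE ?eqxx.
- by exists z; rewrite // inE zs orbT.
Qed.

Lemma mem_radii c y s : (mkedge c y \in radii c s) = (y \in s).
Proof.
apply/imfsetP/idP => [[z zs /mkedge_inj ->] //|ys]; by exists y.
Qed.

Lemma simple_on_radii c s : c \notin s -> simple_on (c :: s) (radii c s).
Proof.
elim: s => [|v s IH]; first by move=> _ e /imfsetP [].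
rewrite inE negb_or radii_cons => /andP [cv cs]; apply: simple_onU1; rewrite ?inE ?eqxx ?orbT //.
by apply: simple_on_sub (IH cs) => z; rewrite !inE => /orP [->|->]; rewrite ?orbT.
Qed.

Lemma card_radii c s : c \notin s -> uniq s -> #|` radii c s| = size s.
Proof.
elim: s => [|v s IH] /=; first by rewrite radii_nil cardfs0.
rewrite inE negb_or => /andP [cv cs] /andP [vs su].
by rewrite radii_cons cardfsU1 mem_radii vs IH.
Qed.

Lemma spanning_tree_radii c s : c \notin s -> uniq s -> spanning_tree (c :: s) (radii c s).
Proof.
elim: s => [|v s IH]; first by rewrite radii_nil => _ _; exact: spanning_tree1.
rewrite inE negb_or => /andP [cv cs] /andP [vs su]; rewrite radii_cons mkedgeC.
apply: (spanning_tree_eq_mem (V := v :: c :: s)); first by move=> z; rewrite !inE orbCA.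
by apply: spanning_tree_pendant; rewrite ?inE ?negb_or ?eqxx ?(eq_sym v) ?cv ?vs //; exact: IH.
Qed.

Lemma simple_on_chords vs : uniq vs -> 1 < size vs -> simple_on vs (chords vs).
Proof.
case: vs => [//|x [//|y s]] xu _; rewrite chords_cons path_edges_rcons.
have lastxs : last x (y :: s) \in y :: s by exact: mem_last.
apply: simple_onU1; [|by rewrite inE lastxs orbT|by rewrite inE eqxx|exact: simple_on_path_edges].
by apply: contraTneq lastxs => ->; move: xu => /andP [].
Qed.

Lemma simple_on_wheel_edges v0 vs : uniq (v0 :: vs) -> 1 < size vs ->
  simple_on (v0 :: vs) (wheel_edges v0 vs).
Proof.
move=> /andP [v0vs vsu] vs2; apply: simple_onU; first exact: simple_on_radii.
by apply: simple_on_sub (simple_on_chords vsu vs2) => z zvs; rewrite inE zvs orbT.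
Qed.

Lemma coupled_tree_card v0 vs T : uniq (v0 :: vs) -> 1 < size vs ->
  coupled_tree v0 vs T -> #|` T| <= size vs.
Proof.
move=> vu vs2 [TW [_ _ acyc] _]; apply: (acyclic_card (V := v0 :: vs)) => //.
exact: simple_on_fsub TW (simple_on_wheel_edges vu vs2).
Qed.

Lemma wheel_edges_radius v0 vs y : uniq (v0 :: vs) -> 1 < size vs ->
  mkedge v0 y \in wheel_edges v0 vs -> y \in vs.
Proof.
move=> /andP [v0vs vsu] vs2; rewrite in_fsetU mem_radii => /orP [//|].
by rewrite (negbTE (mkedge_notin _ (simple_on_ends (simple_on_chords vsu vs2)) v0vs)).
Qed.

(* Part (i), with [w0], [w1], [wk] the paper's v1, v2, vk. *)
Section MinimalCenter.

Variables (v0 w0 w1 : nat) (s : seq nat).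
Local Notation vs := [:: w0, w1 & s].
Local Notation wk := (last w1 s).
Local Notation R := (radii v0 (w1 :: s)).
Local Notation P := (path_edges w1 s).
Local Notation T := (mkedge w0 wk |` R).

Hypotheses (vu : uniq (v0 :: vs))
  (center_min : forall v, v \in vs -> v0 < v) (w0_max : forall v, v \in vs -> v <= w0)
  (wk_lt : wk < w1).

Let v0_notin : v0 \notin w1 :: s.
Proof. by move: vu; rewrite /= !inE !negb_or => /and4P [/and3P [_ -> ->]]. Qed.
Let w0_notin : w0 \notin v0 :: w1 :: s.
Proof.
by move: vu; rewrite /= !inE !negb_or (eq_sym w0 v0) => /and4P [/and3P [-> _ _] /andP [-> ->]].
Qed.
Let w1s_uniq : uniq (w1 :: s).
Proof. by move: vu => /and3P []. Qed.
Let wk_in : wk \in w1 :: s.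
Proof. exact: mem_last. Qed.

Let w0_in : w0 \in vs. Proof. exact: mem_head. Qed.
Let w1_in : w1 \in vs. Proof. by rewrite !inE eqxx orbT. Qed.
Let wk_in_vs : wk \in vs. Proof. by rewrite inE wk_in orbT. Qed.

Lemma min_center_wheel_edges :
  wheel_edges v0 vs = (mkedge v0 w0 |` R) `|` (mkedge w0 wk |` (mkedge w0 w1 |` P)).
Proof. by rewrite /wheel_edges radii_cons chords_cons path_edges_rcons [mkedge w0 wk]mkedgeC. Qed.

Lemma min_center_treeE : (radii v0 vs `\ mkedge v0 w0) `|` [fset mkedge wk w0] = T.
Proof.
rewrite radii_cons fsetU1K ?mem_radii; last by move: w0_notin; rewrite inE negb_or => /andP [].
by rewrite fsetUC mkedgeC.
Qed.

Let R_simple : simple_on (v0 :: w1 :: s) R.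
Proof. exact: simple_on_radii v0_notin. Qed.
Let P_simple : simple_on (w1 :: s) P.
Proof. exact: simple_on_path_edges w1s_uniq. Qed.
Let radius_notin_P y : mkedge v0 y \notin P.
Proof. exact: mkedge_notin (simple_on_ends P_simple) v0_notin. Qed.
Let w0_edge_notin_R y : mkedge w0 y \notin R.
Proof. exact: mkedge_notin (simple_on_ends R_simple) w0_notin. Qed.
Let w0_edge_notin_P y : mkedge w0 y \notin P.
Proof.
apply: mkedge_notin (simple_on_ends P_simple) _.
by apply: contra w0_notin => w0in; rewrite inE w0in orbT.
Qed.
Let radius_neq_chord y a b : a \in vs -> b \in vs -> mkedge v0 y != mkedge a b.
Proof.
move=> /center_min a0 /center_min b0; apply/eqP => /mkedge_eq [] [v0E _].
- by move: a0; rewrite v0E ltnn.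
- by move: b0; rewrite v0E ltnn.
Qed.

Lemma min_center_cotreeE : wheel_edges v0 vs `\` T = path_edges v0 vs.
Proof.
apply/fsetP => e; rewrite min_center_wheel_edges /= !inE.
have [/imfsetP [y ys ->]|eR] := boolP (e \in R).
  rewrite orbT /= (negbTE (radius_notin_P _)) (negbTE (radius_neq_chord _ w0_in w1_in)).
  by rewrite !orbF; apply/esym/negP => /eqP /mkedge_inj y0; move: w0_notin; rewrite -y0 inE ys orbT.
have [->|eck] := eqVneq e (mkedge w0 wk); last by rewrite !orbF.
rewrite /= (negbTE (w0_edge_notin_P _)) eq_sym (negbTE (radius_neq_chord _ w0_in wk_in_vs)) orbF /=.
by apply/esym/negP => /eqP /mkedge_inj wk1; move: wk_lt; rewrite wk1 ltnn.
Qed.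

Lemma min_center_coupled : coupled_tree v0 vs T.
Proof.
split.
- apply/fsubsetP => e; rewrite min_center_wheel_edges !inE => /orP [] ->; by rewrite !orbT.
- apply: (spanning_tree_eq_mem (V := w0 :: v0 :: w1 :: s)); first by move=> z; rewrite !inE orbCA.
  apply: spanning_tree_pendant w0_notin _; first exact: spanning_tree_radii v0_notin _.
  by rewrite inE wk_in orbT.
- rewrite min_center_cotreeE; exact: spanning_tree_path_edges.
Qed.

Lemma min_center_card : #|` T| = size vs.
Proof. by rewrite cardfsU1 w0_edge_notin_R card_radii. Qed.

Lemma min_center_radius_not_leading T' : coupled_tree v0 vs T' ->
  mkedge v0 w0 \in T' -> ~ agree_above T T' (mkedge v0 w0).
Proof.
move=> [_ _ [_ conn _]] r0T' agree.
have radT' y : y \in vs -> mkedge v0 y \in T'.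
  rewrite inE => /predU1P [-> //|ys]; rewrite -agree ?inE ?mem_radii ?ys ?orbT //.
  have yw0 : y != w0 by apply: contraNneq w0_notin => <-; rewrite inE ys orbT.
  have yvs : y \in vs by rewrite inE ys orbT.
  apply: edge_succ_mkedge_shared; first by rewrite ltn_neqAle yw0 w0_max.
  - by rewrite neq_ltn center_min.
  - by rewrite neq_ltn center_min.
have v0w0 : v0 != w0 by rewrite neq_ltn center_min.
have w0V : w0 \in v0 :: vs by rewrite inE w0_in orbT.
have [y] := connected_on_neighbour conn (mem_head v0 vs) w0V v0w0.
rewrite /adj in_fsetD => /andP [/negP yT' yW]; apply: yT'; apply: radT'.
exact: wheel_edges_radius vu _ yW.
Qed.

Lemma min_center_first_chord_not_leading T' : coupled_tree v0 vs T' ->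
  mkedge w0 w1 \in T' -> ~ agree_above T T' (mkedge w0 w1).
Proof.
move=> [_ [_ _ acyc] _] c0T' agree; apply: acyc.
have w01 : w0 != w1 by apply: contraNneq w0_notin => ->; rewrite !inE eqxx orbT.
have w0k : w0 != wk by apply: contraNneq w0_notin => ->; rewrite inE wk_in orbT.
have v00 := center_min w0_in; have v01 := center_min w1_in; have v0k := center_min wk_in_vs.
have r1c0 : edge_succ (mkedge v0 w1) (mkedge w0 w1) := edge_succ_mkedge_below _ v00 v01.
have rkc0 : edge_succ (mkedge v0 wk) (mkedge w0 w1) := edge_succ_mkedge_below _ v00 v01.
have ckc0 : edge_succ (mkedge w0 wk) (mkedge w0 w1) := edge_succ_mkedge_shared wk_lt w0k w01.
exists [:: v0; w1; w0; wk]; split => //.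
  rewrite /= !inE !negb_or (ltn_eqF v01) (ltn_eqF v00) (ltn_eqF v0k) (gtn_eqF wk_lt).
  by rewrite eq_sym w01 w0k.
rewrite /= /adj [mkedge w1 w0]mkedgeC [mkedge wk v0]mkedgeC c0T'.
by rewrite -!agree ?inE ?mem_radii ?mem_head ?wk_in ?eqxx ?orbT.
Qed.

Lemma min_center_inner_chord_not_leading T' m : coupled_tree v0 vs T' ->
  m \in P -> m \in T' -> ~ agree_above T T' m.
Proof.
move=> [_ [_ _ acyc] _] mP; have [m12 m1 m2] := P_simple mP; rewrite -(mkedge_pair m12).
case: m {mP} m12 m1 m2 => a b /= ab a_in b_in mT' agree; apply: acyc.
have v0a : v0 < a by apply: center_min; rewrite inE a_in orbT.
have v0b : v0 < b by apply: center_min; rewrite inE b_in orbT.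
exists [:: v0; a; b]; split => //.
  by rewrite /= !inE !negb_or (ltn_eqF v0a) (ltn_eqF v0b) (ltn_eqF ab).
rewrite /= /adj mT' [mkedge b v0]mkedgeC -!agree ?inE ?mem_radii ?a_in ?b_in ?orbT //.
all: exact: edge_succ_mkedge_below.
Qed.

Lemma min_center_leading_tree : leading_tree v0 vs T.
Proof.
split=> [|T' T'cpl T'T]; first exact: min_center_coupled.
apply: set_succ_of_no_leading_edge => // [|m mT' mT].
  by rewrite min_center_card; exact: coupled_tree_card T'cpl.
have := fsubsetP (let: And3 T'W _ _ := T'cpl in T'W) m mT'.
rewrite min_center_wheel_edges !inE => /or4P [/orP [/eqP mr0|mR]|/eqP mck|/eqP mc0|mP].
- by rewrite mr0 in mT' *; exact: min_center_radius_not_leading.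
- by move: mT; rewrite inE mR orbT.
- by move: mT; rewrite in_fset1U mck eqxx.
- by rewrite mc0 in mT' *; exact: min_center_first_chord_not_leading.
- exact: min_center_inner_chord_not_leading T'cpl mP mT'.
Qed.

End MinimalCenter.

(* Part (ii), with [w0], [w1] the paper's v1, v2; [p] lists v2, ..., vk, v1. *)
Section MaximalCenter.

Variables (v0 w0 w1 : nat) (s : seq nat).
Local Notation vs := [:: w0, w1 & s].
Local Notation p := (w1 :: rcons s w0).
Local Notation R := (radii v0 (w0 :: s)).
Local Notation P := (path_edges w1 (rcons s w0)).
Local Notation T := (path_edges v0 p).

Hypotheses (vu : uniq (v0 :: vs)) (s0 : s != [::])
  (center_max : forall v, v \in vs -> v < v0)
  (first_chord_min : forall e, e \in chords vs -> e != mkedge w0 w1 -> edge_succ e (mkedge w0 w1))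
  (w1_lt : w1 < w0).

Let p_perm : perm_eq p vs.
Proof. by rewrite -rcons_cons -rot1_cons perm_rot. Qed.
Let p_uniq : uniq (v0 :: p).
Proof. by rewrite cons_uniq (perm_mem p_perm) (perm_uniq p_perm) -cons_uniq. Qed.

Let v0_notin : v0 \notin p.
Proof. by case/andP: p_uniq. Qed.
Let w1_notin : w1 \notin v0 :: w0 :: s.
Proof.
by move: vu; rewrite /= !inE !negb_or !(eq_sym w1) => /and4P [/and3P [_ -> _] /andP [-> _] -> _].
Qed.
Let P_simple : simple_on p P.
Proof. by apply: simple_on_path_edges; case/andP: p_uniq. Qed.
Let v0_notin_w0s : v0 \notin w0 :: s.
Proof. by move: vu; rewrite /= !inE !negb_or => /and4P [/and3P [-> _ ->]]. Qed.
Let w0s_uniq : uniq (w0 :: s).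
Proof. by move: vu; rewrite /= !inE !negb_or => /and4P [_ /andP [_ ->] _ ->]. Qed.
Let R_simple : simple_on (v0 :: w0 :: s) R.
Proof. exact: simple_on_radii v0_notin_w0s. Qed.
Let radius_notin_P y : mkedge v0 y \notin P.
Proof. exact: mkedge_notin (simple_on_ends P_simple) v0_notin. Qed.
Let first_chord_notin_P : mkedge w0 w1 \notin P.
Proof.
move: vu p_uniq; case: s s0 => [//|y s'] _ vu' /andP [_ pu]; rewrite mkedgeC /=.
apply/negP => /(mem_path_edges_start pu) w0y; move: vu'; rewrite w0y /=.
by rewrite !inE eqxx !orbT andbF.
Qed.

Let vs_uniq : uniq vs.
Proof. by case/andP: vu. Qed.
Let chordsE : chords vs = mkedge w0 w1 |` P.
Proof. by rewrite chords_cons. Qed.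
Let v0_neq v : v \in vs -> v0 != v.
Proof. by move=> /center_max; rewrite eq_sym ltn_neqAle => /andP []. Qed.

Lemma max_center_wheel_edges :
  wheel_edges v0 vs = (mkedge v0 w1 |` R) `|` (mkedge w0 w1 |` P).
Proof.
rewrite /wheel_edges !radii_cons chords_cons /=; congr (_ `|` _).
by apply/fsetP => e; rewrite !inE orbCA.
Qed.

Lemma max_center_treeE : (chords vs `\ mkedge w0 w1) `|` [fset mkedge v0 w1] = T.
Proof. by rewrite chords_cons /= fsetU1K // fsetUC. Qed.

Lemma max_center_cotreeE : wheel_edges v0 vs `\` T = mkedge w1 w0 |` R.
Proof.
apply/fsetP => e; rewrite max_center_wheel_edges /= !inE.
have [/imfsetP [y ys ->]|eR] := boolP (e \in R).
  rewrite orbT (negbTE (radius_notin_P _)) orbF /= andbT orbT.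
  by apply: contraNneq w1_notin => /mkedge_inj <-; rewrite inE ys orbT.
rewrite orbF [mkedge w1 w0]mkedgeC; have [->|ec0] := eqVneq e (mkedge w0 w1).
  rewrite (negbTE first_chord_notin_P) orbT andbT orbF /=; apply/negP.
  rewrite mkedgeC [mkedge v0 w1]mkedgeC => /eqP /mkedge_inj w0v0.
  by move: (center_max (mem_head w0 (w1 :: s))); rewrite w0v0 ltnn.
by case: (e == _) (e \in P) => [] [].
Qed.

Lemma max_center_coupled : coupled_tree v0 vs T.
Proof.
split.
- apply/fsubsetP => e; rewrite max_center_wheel_edges /= !inE => /orP [] ->; by rewrite ?orbT.
- apply: spanning_tree_eq_mem (spanning_tree_path_edges p_uniq).
  by move=> z; rewrite in_cons (perm_mem p_perm) -in_cons.
- rewrite max_center_cotreeE; apply: (spanning_tree_eq_mem (V := w1 :: v0 :: w0 :: s)).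
    by move=> z; rewrite !inE; case: (z == w1) (z == v0) (z == w0) => [] [] []; rewrite ?orbT.
  apply: spanning_tree_pendant w1_notin _; last by rewrite !inE eqxx orbT.
  exact: spanning_tree_radii v0_notin_w0s w0s_uniq.
Qed.

Lemma max_center_card : #|` T| = size vs.
Proof. by rewrite card_path_edges //= size_rcons. Qed.

Lemma max_center_first_radius_not_leading T' : coupled_tree v0 vs T' ->
  mkedge v0 w0 \in T' -> ~ agree_above T T' (mkedge v0 w0).
Proof.
move=> [_ [_ _ acyc] _] r0T' agree; apply: acyc.
have TT' : T `<=` T'.
  apply/fsubsetP => h hT; rewrite -agree //.
  move: hT; rewrite /= in_fset1U => /orP [/eqP ->|hP].
    by apply: (edge_succ_mkedge_shared w1_lt); rewrite v0_neq // !inE eqxx ?orbT.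
  have hC : h \in chords vs by rewrite chordsE in_fset1U hP orbT.
  have hc0 : h != mkedge w0 w1 by apply: contraNneq first_chord_notin_P => <-.
  have := edge_succ_fst (first_chord_min hC hc0); rewrite /= (minn_idPr (ltnW w1_lt)) => hw1.
  have [h12 h1 _] := P_simple hP; rewrite -(mkedge_pair h12).
  apply: edge_succ_mkedge_below; last exact: leq_ltn_trans hw1 w1_lt.
  by apply: center_max; rewrite -(perm_mem p_perm).
exists (v0 :: p); split => //; first by rewrite /= size_rcons.
have pT' : path (adj T') v0 p by apply: sub_path (path_edges_path v0 p) => x y /(fsubsetP TT').
change (path (adj T') v0 (rcons p v0)); rewrite rcons_path pT' /= last_rcons.
by rewrite /adj mkedgeC.
Qed.

Lemma max_center_other_radius_not_leading T' y : coupled_tree v0 vs T' -> y \in s ->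
  mkedge v0 y \in T' -> ~ agree_above T T' (mkedge v0 y).
Proof.
move=> [T'W _ [_ conn _]] ys ryT' agree.
have yvs : y \in vs by rewrite !inE ys !orbT.
have yV : y \in v0 :: vs by rewrite inE yvs orbT.
have yv0 : y != v0 by rewrite eq_sym v0_neq.
have [y' /=] := connected_on_neighbour conn yV (mem_head v0 vs) yv0.
rewrite /adj in_fsetD => /andP [hT' hW].
have hC : mkedge y y' \in chords vs.
  move: hW; rewrite in_fsetU => /orP [/imfsetP [z _ /mkedge_eq [] []] Ey Ey'|//].
  - by move: yv0; rewrite Ey eqxx.
  - by move: hT'; rewrite Ey' mkedgeC ryT'.
have C_simple := simple_on_chords vs_uniq (erefl true).
have [_ y'vs] := adj_mem C_simple hC.
have yy' : y != y' by apply: contraNneq (simple_on_adj_irr y C_simple) => {2}->.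
have hsucc : edge_succ (mkedge y y') (mkedge v0 y).
  by rewrite [mkedge v0 y]mkedgeC; exact: (edge_succ_mkedge_shared (center_max y'vs) yy' yv0).
move: hC; have := agree _ hsucc; rewrite (negbTE hT') chordsE /= !inE => /norP [_ /negbTE ->].
rewrite orbF => /eqP /mkedge_eq [] [Ey _].
- by move: w0s_uniq; rewrite -Ey /= ys.
- by move: w1_notin; rewrite -Ey !inE ys !orbT.
Qed.

Lemma max_center_chord_not_leading T' : coupled_tree v0 vs T' ->
  mkedge w0 w1 \in T' -> ~ agree_above T T' (mkedge w0 w1).
Proof.
move=> [_ [_ _ acyc] _] c0T' agree; apply: acyc.
have CT' : chords vs `<=` T'.
  apply/fsubsetP => h hC; have [->//|hc0] := eqVneq h (mkedge w0 w1).
  rewrite -agree ?first_chord_min //; move: hC; rewrite chordsE in_fset1U (negbTE hc0) /= => hP.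
  by rewrite in_fset1U hP orbT.
apply: (has_cycle_fsub CT'); exists vs; split; [by case: (s) s0|exact: vs_uniq|exact: chords_cycle].
Qed.

Lemma max_center_leading_tree : leading_tree v0 vs T.
Proof.
split=> [|T' T'cpl T'T]; first exact: max_center_coupled.
apply: set_succ_of_no_leading_edge => // [|m mT' mT].
  by rewrite max_center_card; exact: coupled_tree_card T'cpl.
have := fsubsetP (let: And3 T'W _ _ := T'cpl in T'W) m mT'.
rewrite max_center_wheel_edges !inE => /or3P [/orP [/eqP mr1|/imfsetP [y]]|/eqP mc0|mP].
- by move: mT; rewrite /= in_fset1U mr1 eqxx.
- move=> yin; have : y \in w0 :: s := yin; rewrite inE => /orP [/eqP -> mr0|ys my].
    by rewrite mr0 in mT' *; exact: max_center_first_radius_not_leading.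
  by rewrite my in mT' *; exact: max_center_other_radius_not_leading.
- by rewrite mc0 in mT' *; exact: max_center_chord_not_leading.
- by move: mT; rewrite /= in_fset1U mP orbT.
Qed.

End MaximalCenter.

Theorem proposition4p2 (n : nat) (v0 : nat) (vs : seq nat) :
  is_wheel n v0 vs ->
  (* (i) center is the minimum vertex, v1 = max spoke, v2 > vk *)
  ((forall v, v \in vs -> v0 < v) ->
   (forall v, v \in vs -> v <= nth 0 vs 0) ->
   nth 0 vs (size vs).-1 < nth 0 vs 1 ->
   leading_tree v0 vs
     ((radii v0 vs `\ mkedge v0 (nth 0 vs 0))
        `|` [fset mkedge (nth 0 vs (size vs).-1) (nth 0 vs 0)])) /\
  (* (ii) center is the maximum vertex, v1v2 the ≻-smallest chord, v1 > v2 *)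
  ((forall v, v \in vs -> v < v0) ->
   (forall e, e \in chords vs -> e != mkedge (nth 0 vs 0) (nth 0 vs 1) ->
      edge_succ e (mkedge (nth 0 vs 0) (nth 0 vs 1))) ->
   nth 0 vs 1 < nth 0 vs 0 ->
   leading_tree v0 vs
     ((chords vs `\ mkedge (nth 0 vs 0) (nth 0 vs 1))
        `|` [fset mkedge v0 (nth 0 vs 1)])).
Proof.
case=> size_vs vu _; rewrite nth_last.
case: vs size_vs vu => [|w0 [|w1 s]] // size_vs vu; have s0 : s != [::] by case: (s) size_vs.
split=> [center_min w0_max wk_lt|center_max chord_min w1_lt].
- by rewrite min_center_treeE //; exact: min_center_leading_tree.
- by rewrite max_center_treeE //; exact: max_center_leading_tree.
Qed.
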